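(* Let $G=(m,n,\boldsymbol{c},\boldsymbol{d},r_{\max},r_{\min})$ be an interbank lending game. Then the continuous-time best-response dynamics $$\frac{ds_i(t)}{dt}=\hat s_i(t)-s_i(t),\qquad \hat s_i(t)\in\mathrm{BR}_i(\boldsymbol{s}(t)),\qquad i\in L,$$ converges to the unique pure Nash equilibrium $\boldsymbol{s}^*$ of $G$ from any initial state $\boldsymbol{s}(0)\in\boldsymbol{S}$, i.e. $\boldsymbol{s}(t)\to\boldsymbol{s}^*$ as $t\to\infty$.
   Context: An interbank lending game $G=(m,n,\boldsymbol{c},\boldsymbol{d},r_{\max},r_{\min})$ consists of positive integers $m,n$, budgets $\boldsymbol{c}\in\mathbb{R}_{>0}^m$, demands $\boldsymbol{d}\in\mathbb{R}_{>0}^n$ and reals $0<r_{\min}<r_{\max}$. The players are the lenders $L=\{1,\dots,m\}$; $B=\{1,\dots,n\}$ is the set of borrowers. Lender $i$'s strategy set is $S_i=\{s_i\in\mathbb{R}_{\ge0}^n:\sum_{j\in B}s_{ij}\le c_i\}$, the strategy space is $\boldsymbol{S}=\prod_{i\in L}S_i$ with elements $\boldsymbol{s}=(s_{ij})$. The interest rate of borrower $j$ is $r_j(\boldsymbol{s})=(r_{\min}-r_{\max})\frac{\sum_{i\in L}s_{ij}}{d_j}+r_{\max}$ and lender $i$'s utility is $u_i(\boldsymbol{s})=\sum_{j\in B}(r_j(\boldsymbol{s})-r_{\min})s_{ij}$. A pure Nash equilibrium is $\boldsymbol{s}^*\in\boldsymbol{S}$ with $u_i(\boldsymbol{s}^*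 )\ge u_i(s_i,\boldsymbol{s}^*_{-i})$ for all $i\in L$, $s_i\in S_i$; $G$ has exactly one. Lender $i$'s best-response set at $\boldsymbol{s}$ is $\mathrm{BR}_i(\boldsymbol{s})=\arg\max\{u_i(z_i,\boldsymbol{s}_{-i}):z_i\in S_i\}$; in these games it is a singleton for every $\boldsymbol{s}\in\boldsymbol{S}$, so the dynamics above is an ordinary differential equation. *)

From HB Require Import structures.
From mathcomp Require Import all_boot all_order all_algebra.
From mathcomp Require Import all_classical all_reals all_analysis.
Set Implicit Arguments. Unset Strict Implicit. Unset Printing Implicit Defensive.
Import Order.TTheory GRing.Theory Num.Theory.
Import numFieldNormedType.Exports.
Local Open Scope ring_scope.

Section IBL.
Variables (R : realType) (m n : nat).

(* A strategy profile s : lender i lends s i j to borrower j. *)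
Definition profile := 'I_m -> 'I_n -> R.

Definition rate (d : 'I_n -> R) (rmax rmin : R) (s : profile) (j : 'I_n) : R :=
  (rmin - rmax) * ((\sum_(i < m) s i j) / d j) + rmax.

Definition utility (d : 'I_n -> R) (rmax rmin : R) (i : 'I_m) (s : profile) : R :=
  \sum_(j < n) (rate d rmax rmin s j - rmin) * s i j.

Definition in_Si (c : 'I_m -> R) (i : 'I_m) (x : 'I_n -> R) : Prop :=
  (forall j, 0 <= x j) /\ \sum_(j < n) x j <= c i.

Definition in_S (c : 'I_m -> R) (s : profile) : Prop :=
  forall i, in_Si c i (s i).

Definition upd (s : profile) (i : 'I_m) (z : 'I_n -> R) : profile :=
  fun k => if k == i then z else s k.

Definition is_BR (c : 'I_m -> R) (d : 'I_n -> R) (rmax rmin : R)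
    (s : profile) (i : 'I_m) (x : 'I_n -> R) : Prop :=
  in_Si c i x /\
  forall z, in_Si c i z ->
    utility d rmax rmin i (upd s i z) <= utility d rmax rmin i (upd s i x).

Definition is_PNE (c : 'I_m -> R) (d : 'I_n -> R) (rmax rmin : R)
    (s : profile) : Prop :=
  in_S c s /\
  forall i z, in_Si c i z ->
    utility d rmax rmin i (upd s i z) <= utility d rmax rmin i s.

End IBL.

From HB Require Import structures.
From mathcomp Require Import all_boot all_order all_algebra.
From mathcomp Require Import all_classical all_reals all_analysis.
From mathcomp Require Import ring lra.
Import Order.TTheory GRing.Theory Num.Theory.
Import numFieldNormedType.Exports.
Local Open Scope classical_set_scope.
Local Open Scope ring_scope.
Set Implicit Arguments. Unset Strict Implicit. Unset Printing Implicit Defensive.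

(* The game has an exact potential: a unilateral deviation of lender i changes
   u_i by (rmax - rmin) times the change of the strongly concave quadratic
   [potential].  Along the flow, d/dt potential = <grad potential, shat - s>,
   and comparing each best response with the midpoint of s_i and s*_i bounds
   this from below by half the gap E = potential s* - potential s.  Hence
   E' <= - E / 2, so t E(t) is nonincreasing for t >= 2, while strong concavity
   at the equilibrium gives (s_ij - s*_ij)^2 <= 2 d_j E = O(1/t).  Each
   coordinate relaxes towards a point of S_i, so the trajectory never leaves S. *)

Section Calculus.
Variable R : realType.

Lemma is_derive_sum_pointwise k (f : 'I_k -> R -> R) (df : 'I_k -> R) (t : R) :
  (forall i, is_derive t 1 (f i) (df i)) ->
  is_derive t 1 (fun u => \sum_(i < k) f i u) (\sum_(i < k) df i).
Proof.
move=> fdf; have := is_derive_sum fdf.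
by rewrite (_ : \sum_(i < k) f i = fun u => \sum_(i < k) f i u) // funeqE => u; rewrite fct_sumE.
Qed.

Lemma derive_ge0_nondecreasing (f : R -> R) (a : R) :
  (forall u, a < u -> exists2 df, 0 <= df & is_derive u 1 f df) ->
  forall x y, a < x -> x <= y -> f x <= f y.
Proof.
move=> hf x y ax xy.
have der u : a < u -> derivable f u 1 by case/hf => df _ /@ex_derive.
apply: (@ger0_derive1_le_oo R f a (y + 1)) => //.
- by move=> u; rewrite in_itv /= => /andP[/der].
- move=> u; rewrite in_itv /= => /andP[/hf[df df0 fdf] _].
  by rewrite derive1E derive_val.
- move=> u; rewrite inE /= in_itv /= => /andP[au _].
  by have /derivable1_diffP/differentiable_continuous : derivable f u 1 := der u au.
- by rewrite in_itv /= ax; lra.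
- by rewrite in_itv /= (lt_le_trans ax xy); lra.
Qed.

Lemma relaxation_ge (x : R -> R) (L : R) :
  x u @[u --> 0^'+] --> x 0 -> L <= x 0 ->
  (forall u : R, 0 < u -> exists2 y, L <= y & is_derive u 1 x (y - x u)) ->
  forall t, 0 < t -> L <= x t.
Proof.
move=> x0 Lx0 hx t t0.
pose w u := expR u * (x u - L).
have w_ndecr : forall u v, 0 < u -> u <= v -> w u <= w v.
  apply: derive_ge0_nondecreasing => u /hx[y Ly dx].
  exists (expR u * (y - L)); first by rewrite mulr_ge0 ?expR_ge0 ?subr_ge0.
  apply: is_derive_eq (is_deriveM (is_derive_expR u) (is_deriveB dx (is_derive_cst L u 1))) _.
  rewrite !fctE -![_ *: _]/(_ * _); ring.
have w0 : w u @[u --> 0^'+] --> w 0.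
  apply: cvgM; last exact: cvgB x0 (cvg_cst _).
  by apply: cvg_within_filter; exact: continuous_expR.
have : w 0 <= w t.
  apply: (ler_cvg_to w0 (cvg_cst (w t))).
  by near=> u; apply: w_ndecr; near: u; [exact: nbhs_right_gt|exact: nbhs_right_le].
rewrite /w expR0 mul1r => wt.
have : 0 <= expR t * (x t - L) by apply: le_trans wt; rewrite subr_ge0.
by rewrite pmulr_rge0 ?expR_gt0 // subr_ge0.
Unshelve. all: end_near.
Qed.

Lemma time_weighted_le (g : R -> R) (a t : R) :
  (forall u, 0 < u -> 0 <= g u) ->
  (forall u, 0 < u -> exists2 dg, dg <= - g u / 2 & is_derive u 1 g dg) ->
  2 < a -> a <= t -> t * g t <= a * g a.
Proof.
move=> g0 dg a2 a_le_t.
rewrite -lerN2.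
apply: (derive_ge0_nondecreasing (f := fun u => - (u * g u)) (a := 2) _ a2 a_le_t) => u u2.
have u0 : 0 < u by apply: lt_trans u2.
have [dgu dgu_le gdg] := dg u u0.
exists (- (u * dgu + g u)); first by have := g0 u u0; nra.
apply: is_derive_eq (is_deriveN (is_deriveM (is_derive_id u 1) gdg)) _.
by rewrite -![_ *: _]/(_ * _) mulr1 addrC.
Qed.

Lemma cvg_of_sqr_le_div (f : R -> R) (l K a : R) :
  (forall t, a <= t -> (f t - l) ^+ 2 <= K / t) -> f t @[t --> +oo] --> l.
Proof.
move=> fK; apply/cvgrPdist_le => eps eps0.
have eps2 : 0 < eps ^+ 2 by rewrite exprn_gt0.
near=> t.
have ta : a <= t by near: t; apply: nbhs_pinfty_ge; exact: num_real.
have t1 : 1 <= t by near: t; apply: nbhs_pinfty_ge; exact: num_real.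
have tK : K / eps ^+ 2 <= t by near: t; apply: nbhs_pinfty_ge; exact: num_real.
have t0 : 0 < t by lra.
have := fK t ta; rewrite ler_pdivrMr // in tK.
rewrite ler_pdivlMr // => sq_le.
have : (f t - l) ^+ 2 <= eps ^+ 2 by rewrite -(ler_pM2r t0); lra.
by rewrite ler_norml => ?; apply/andP; split; nra.
Unshelve. all: end_near.
Qed.

End Calculus.

Section Potential.
Variables (R : realType) (m n : nat) (c : 'I_m -> R) (d : 'I_n -> R) (rmax rmin : R).
Hypotheses (hd : forall j, 0 < d j) (hr : rmin < rmax).
Local Notation profile := (profile R m n).
Implicit Types (s e : profile) (i : 'I_m) (j : 'I_n) (x y z : 'I_n -> R).

Definition load s j := \sum_(i < m) s i j.

Definition potential s := \sum_(j < n)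
  (load s j - (load s j ^+ 2 + \sum_(i < m) s i j ^+ 2) / (2 * d j)).

Definition potential_grad s i j := 1 - (load s j + s i j) / d j.

Definition gain s i z :=
  \sum_(j < n) (potential_grad s i j * (z j - s i j) - (z j - s i j) ^+ 2 / d j).

Let d_neq0 j : d j != 0. Proof. by rewrite gt_eqF. Qed.
Let spread_gt0 : 0 < rmax - rmin. Proof. by rewrite subr_gt0. Qed.

Lemma sum_potential_grad s e j : \sum_(i < m) potential_grad s i j * e i j =
  load e j - (load s j * load e j + \sum_(i < m) s i j * e i j) / d j.
Proof.
rewrite (eq_bigr (fun i => e i j - (load s j * e i j + s i j * e i j) / d j)).
  by rewrite sumrB -mulr_suml big_split /= -mulr_sumr.
by move=> i _; rewrite /potential_grad; field.
Qed.

Lemma potential_expansion s e :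
  potential (fun i j => s i j + e i j) - potential s =
  \sum_(i < m) \sum_(j < n) potential_grad s i j * e i j
  - \sum_(j < n) (load e j ^+ 2 + \sum_(i < m) e i j ^+ 2) / (2 * d j).
Proof.
rewrite /potential exchange_big /= -!sumrB; apply: eq_bigr => j _.
rewrite sum_potential_grad.
have -> : load (fun i j => s i j + e i j) j = load s j + load e j by rewrite -big_split.
have -> : \sum_(i < m) (s i j + e i j) ^+ 2 = \sum_(i < m) s i j ^+ 2
   + 2 * \sum_(i < m) s i j * e i j + \sum_(i < m) e i j ^+ 2.
  rewrite mulr_sumr -!big_split; apply: eq_bigr => i _ /=; ring.
by field.
Qed.

Lemma potential_sub_le (s s' : profile) :
  potential s' - potential s <=
  \sum_(i < m) \sum_(j < n) potential_grad s i j * (s' i j - s i j)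
  - (\sum_(i < m) \sum_(j < n) (s' i j - s i j) ^+ 2 / d j) / 2.
Proof.
have s'E : s' = fun i j => s i j + (s' i j - s i j).
  by apply/funext => i; apply/funext => j; rewrite addrC subrK.
rewrite {1}s'E potential_expansion lerD2l lerN2 exchange_big /= mulr_suml.
apply: ler_sum => j _; rewrite -mulr_suml mulrDl -mulrA -invfM [d j * 2]mulrC lerDr.
by rewrite divr_ge0 ?sqr_ge0 // mulr_ge0 // ltW.
Qed.

Lemma utility_upd_gain s i z :
  utility d rmax rmin i (upd s i z) - utility d rmax rmin i s =
  (rmax - rmin) * gain s i z.
Proof.
rewrite /utility /gain -sumrB mulr_sumr; apply: eq_bigr => j _.
rewrite /rate /potential_grad /load (bigD1 i) //= (bigD1 i (P := xpredT)) //=.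
rewrite (eq_bigr (fun k => s k j) (P := fun k => k != i)) /upd ?eqxx; first by field.
by move=> k /negPf ->.
Qed.

Lemma gain_le_linear s i z :
  gain s i z <= \sum_(j < n) potential_grad s i j * (z j - s i j).
Proof.
by apply: ler_sum => j _; rewrite lerBlDr lerDl divr_ge0 ?sqr_ge0 // ltW.
Qed.

Lemma gain_segment s i y t :
  gain s i (fun j => s i j + t * (y j - s i j)) =
  t * \sum_(j < n) potential_grad s i j * (y j - s i j)
  - t ^+ 2 * \sum_(j < n) (y j - s i j) ^+ 2 / d j.
Proof. by rewrite /gain !mulr_sumr -sumrB; apply: eq_bigr => j _; field. Qed.

Lemma in_Si_segment i x y t : in_Si c i x -> in_Si c i y -> 0 <= t <= 1 ->
  in_Si c i (fun j => x j + t * (y j - x j)).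
Proof.
move=> [x0 xc] [y0 yc] /andP[t0 t1]; split.
  by move=> j; have := x0 j; have := y0 j; nra.
rewrite big_split /= -mulr_sumr sumrB; nra.
Qed.

Lemma is_BR_gain_max s i x y :
  is_BR c d rmax rmin s i x -> in_Si c i y -> gain s i y <= gain s i x.
Proof.
move=> [_ xbest] /xbest yx.
by rewrite -(ler_pM2l spread_gt0) -!utility_upd_gain lerB.
Qed.

Lemma is_PNE_gain_le0 s i y : is_PNE c d rmax rmin s -> in_Si c i y -> gain s i y <= 0.
Proof.
move=> [_ sbest] /sbest ys.
by rewrite -(ler_pM2l spread_gt0) mulr0 -utility_upd_gain subr_le0.
Qed.

Lemma BR_grad_ge_potential_gap s s' b : in_S c s -> in_S c s' ->
  (forall i, is_BR c d rmax rmin s i (b i)) ->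
  (potential s' - potential s) / 2 <=
  \sum_(i < m) \sum_(j < n) potential_grad s i j * (b i j - s i j).
Proof.
move=> sS s'S bBR.
have half_step i : 2^-1 * \sum_(j < n) potential_grad s i j * (s' i j - s i j)
    - 2^-1 ^+ 2 * \sum_(j < n) (s' i j - s i j) ^+ 2 / d j
    <= \sum_(j < n) potential_grad s i j * (b i j - s i j).
  rewrite -gain_segment; apply: le_trans (gain_le_linear _ _ _).
  by apply: is_BR_gain_max (bBR i) _; apply: in_Si_segment => //; lra.
have := ler_sum (index_enum 'I_m) (P := xpredT) (fun i _ => half_step i).
rewrite sumrB -!mulr_sumr; apply: le_trans.
have := potential_sub_le s s'; lra.
Qed.

Lemma is_PNE_grad_le0 s s' i : in_S c s -> is_PNE c d rmax rmin s' ->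
  \sum_(j < n) potential_grad s' i j * (s i j - s' i j) <= 0.
Proof.
move=> sS s'NE.
set A := \sum_(j < n) _; set B := \sum_(j < n) (s i j - s' i j) ^+ 2 / d j.
have B0 : 0 <= B by apply: sumr_ge0 => j _; rewrite divr_ge0 ?sqr_ge0 // ltW.
rewrite leNgt; apply/negP => A0.
have AB0 : 0 < A + B by lra.
pose t := A / (A + B).
have t01 : 0 <= t <= 1 by rewrite divr_ge0 ?ler_pdivrMr //= ?mul1r; lra.
have := is_PNE_gain_le0 s'NE (in_Si_segment (s'NE.1 i) (sS i) t01).
have -> : gain s' i (fun j => s' i j + t * (s i j - s' i j)) = A ^+ 3 / (A + B) ^+ 2.
  by rewrite gain_segment -/A -/B /t; field; rewrite gt_eqF.
by rewrite leNgt divr_gt0 ?exprn_gt0.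
Qed.

Lemma is_PNE_potential_gap s s' : in_S c s -> is_PNE c d rmax rmin s' ->
  (\sum_(i < m) \sum_(j < n) (s i j - s' i j) ^+ 2 / d j) / 2 <=
  potential s' - potential s.
Proof.
move=> sS s'NE.
have := ler_sum (index_enum 'I_m) (P := xpredT) (fun i _ => is_PNE_grad_le0 i sS s'NE).
rewrite big1_eq => grad_le0.
have := potential_sub_le s' s; lra.
Qed.

Lemma is_PNE_sqr_dist_le s s' i j : in_S c s -> is_PNE c d rmax rmin s' ->
  (s i j - s' i j) ^+ 2 <= 2 * d j * (potential s' - potential s).
Proof.
move=> sS s'NE; have := is_PNE_potential_gap sS s'NE.
set F := fun i j => (s i j - s' i j) ^+ 2 / d j.
have F0 i' j' : 0 <= F i' j' by rewrite divr_ge0 ?sqr_ge0 // ltW.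
have : F i j <= \sum_(i < m) \sum_(j < n) F i j.
  rewrite (bigD1 i) //= (bigD1 j) //= -addrA lerDl.
  by rewrite addr_ge0 ?sumr_ge0 // => *; rewrite sumr_ge0.
rewrite {1}/F ler_pdivrMr //; have := hd j; nra.
Qed.

Lemma is_derive_potential (s : R -> profile) (t : R) (e : profile) :
  (forall i j, is_derive t 1 (fun u => s u i j) (e i j)) ->
  is_derive t 1 (fun u => potential (s u))
    (\sum_(i < m) \sum_(j < n) potential_grad (s t) i j * e i j).
Proof.
move=> se.
have dload j : is_derive t 1 (fun u => load (s u) j) (load e j).
  exact: is_derive_sum_pointwise.
have dsq j : is_derive t 1 (fun u => \sum_(i < m) s u i j ^+ 2)
    (\sum_(i < m) 2 * s t i j * e i j).
  apply: is_derive_sum_pointwise => i.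
  apply: is_derive_eq (is_deriveX 2 (se i j)) _.
  by rewrite expr1.
apply: is_derive_eq (is_derive_sum_pointwise (fun j => is_deriveB (dload j)
  (is_deriveM (is_deriveD (is_deriveX 2 (dload j)) (dsq j)) (is_derive_cst (2 * d j)^-1 t 1)))) _.
rewrite exchange_big /=; apply: eq_bigr => j _.
rewrite sum_potential_grad fctE scaler0 add0r expr1 -![_ *: _]/(_ * _).
under eq_bigr => i _ do rewrite -mulrA.
by rewrite -mulr_sumr; field.
Qed.

End Potential.

Section BestResponseDynamics.
Variables (R : realType) (m n : nat) (c : 'I_m -> R) (d : 'I_n -> R) (rmax rmin : R).
Hypotheses (hd : forall j, 0 < d j) (hr : rmin < rmax).
Variable traj : R -> profile R m n.
Hypothesis traj_flow : forall t, 0 < t -> forall i, exists shat : 'I_n -> R,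
  is_BR c d rmax rmin (traj t) i shat /\
  forall j, is_derive t 1 (fun u => traj u i j) (shat j - traj t i j).

Lemma traj_in_S : in_S c (traj 0) ->
  (forall i j, traj t i j @[t --> 0^'+] --> traj 0 i j) ->
  forall t, 0 < t -> in_S c (traj t).
Proof.
move=> S0 traj0 t t0 i; split.
  move=> j; apply: (relaxation_ge (traj0 i j) ((S0 i).1 j)) t0 => u u0.
  have [shat [[[shat0 _] _] dshat]] := traj_flow u0 i.
  by exists (shat j).
rewrite -lerN2; apply: (relaxation_ge (x := fun u => - \sum_(j < n) traj u i j)) t0.
- by apply: cvgN; apply: cvg_big => //; exact: add_continuous.
- by rewrite lerN2; exact: (S0 i).2.
move=> u u0; have [shat [[[_ shat_c] _] dshat]] := traj_flow u0 i.
exists (- \sum_(j < n) shat j); first by rewrite lerN2.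
apply: is_derive_eq (is_deriveN (is_derive_sum_pointwise dshat)) _.
by rewrite sumrB opprD opprK.
Qed.

Variable sstar : profile R m n.
Hypotheses (sstar_NE : is_PNE c d rmax rmin sstar)
  (traj_S : forall t, 0 < t -> in_S c (traj t)).

Lemma potential_gap_decay t : 3 <= t ->
  t * (potential d sstar - potential d (traj t)) <=
  3 * (potential d sstar - potential d (traj 3)).
Proof.
move=> t3.
apply: (time_weighted_le (g := fun u => potential d sstar - potential d (traj u)) _ _ _ t3).
- move=> u u0.
  apply: le_trans (is_PNE_potential_gap hd hr (traj_S u0) sstar_NE).
  by rewrite divr_ge0 // !sumr_ge0 // => i _; rewrite sumr_ge0 // => j _;
    rewrite divr_ge0 ?sqr_ge0 // ltW.
- move=> u u0; have [b hb] := choice (traj_flow u0).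
  set G := \sum_(i < m) \sum_(j < n) potential_grad d (traj u) i j * (b i j - traj u i j).
  exists (- G).
    have := BR_grad_ge_potential_gap hd hr (traj_S u0) sstar_NE.1 (fun i => (hb i).1).
    by rewrite -/G; lra.
  apply: is_derive_eq (is_deriveB (is_derive_cst (potential d sstar) u 1)
    (is_derive_potential hd (fun i j => (hb i).2 j))) _.
  by rewrite sub0r.
- lra.
Qed.

End BestResponseDynamics.

Unset Implicit Arguments.

Theorem theorem4p8 (R : realType) (m n : nat)
    (c : 'I_m -> R) (d : 'I_n -> R) (rmax rmin : R)
    (hm : (0 < m)%N) (hn : (0 < n)%N)
    (hc : forall i, 0 < c i) (hd : forall j, 0 < d j)
    (hrmin : 0 < rmin) (hr : rmin < rmax)
    (sstar : profile R m n)
    (hNE : is_PNE c d rmax rmin sstar)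
    (traj : R -> profile R m n)
    (h0 : in_S c (traj 0))
    (hcont0 : forall i j, traj t i j @[t --> 0^'+] --> traj 0 i j)
    (hode : forall t, 0 < t -> forall i : 'I_m,
       exists shat : 'I_n -> R,
         is_BR c d rmax rmin (traj t) i shat /\
         forall j : 'I_n,
           is_derive t 1 (fun u => traj u i j) (shat j - traj t i j)) :
  forall i j, traj t i j @[t --> +oo] --> sstar i j.
Proof.
have traj_S := traj_in_S hode h0 hcont0.
move=> i j; set gap3 := potential d sstar - potential d (traj 3).
apply: (@cvg_of_sqr_le_div _ _ _ (2 * d j * (3 * gap3)) 3) => t t3.
have t0 : 0 < t by lra.
set gap := potential d sstar - potential d (traj t).
rewrite ler_pdivlMr //; apply: le_trans (_ : 2 * d j * gap * t <= _).
  by rewrite ler_pM2r //; exact: (is_PNE_sqr_dist_le hd hr i j (traj_S t t0) hNE).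
rewrite -mulrA [gap * t]mulrC ler_pM2l ?mulr_gt0 //.
exact: (potential_gap_decay hd hr hode hNE traj_S t3).
Qed.
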